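(* For every $1$-Sperner hypergraph ${\cal H}=(V,{\cal E})$ with ${\cal E}\neq\emptyset$ and ${\cal E}\neq\{\emptyset\}$, there exists a vector $x\in\mathbb{R}^V_{+}$ (nonnegative entries) such that $A^{\cal H}x=\mathbf{1}$ and $\mathbf{1}^\top x\ge1$.
   Context: A hypergraph ${\cal H}=(V,{\cal E})$ consists of a finite vertex set $V$ and a set ${\cal E}$ of subsets of $V$. It is $1$-Sperner if every two distinct hyperedges $e,f$ satisfy $\min\{|e\setminus f|,|f\setminus e|\}=1$. The incidence matrix $A^{\cal H}\in\{0,1\}^{{\cal E}\times V}$ has rows indexed by hyperedges and columns by vertices, with entry $1$ at $(e,v)$ iff $v\in e$. $\mathbf{1}$ denotes the all-ones vector of appropriate dimension. *)

From mathcomp Require Import all_boot all_order all_algebra.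
From mathcomp Require Export reals.
Set Implicit Arguments. Unset Strict Implicit. Unset Printing Implicit Defensive.
Import Order.TTheory GRing.Theory Num.Theory.
Local Open Scope ring_scope.

Definition one_sperner (V : finType) (E : {set {set V}}) : Prop :=
  forall e f, e \in E -> f \in E -> e != f ->
    minn #|e :\: f| #|f :\: e| = 1%N.

(* Incidence matrix A^H, rows indexed by hyperedges, columns by vertices:
   entry (e,v) is 1 iff v \in e. *)
Definition incidence (R : realType) (V : finType) (e : {set V}) (v : V) : R :=
  (v \in e)%:R.

Definition incidence_mul (R : realType) (V : finType)
    (x : V -> R) (e : {set V}) : R :=
  \sum_(v : V) incidence R e v * x v.

From mathcomp Require Import all_boot all_order all_algebra.
From mathcomp Require Import reals.
From mathcomp Require Import zify.
Import Order.TTheory GRing.Theory Num.Theory.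
Set Implicit Arguments. Unset Strict Implicit. Unset Printing Implicit Defensive.

(* Induction on the number of covered vertices. A 1-Sperner hypergraph without
   empty edge has a splitting vertex z: for every edge e through z and every
   edge f avoiding z, e minus z is contained in f (take z in e0 \ f, where e0
   is a smallest edge and f a largest edge other than e0). If {z} is an edge,
   it is the only edge through z, and the indicator of z is added to a
   solution for the edges avoiding z. Otherwise a solution x of total weight
   s >= 1 for the link {e \ z | z in e} is rescaled to x/s and completed by
   the weight 1 - 1/s on z: an edge through z gets 1/s + (1 - 1/s), and an
   edge avoiding z contains the whole support of x, so it gets s/s. *)

Definition splitting_vertex (V : finType) (E : {set {set V}}) (z : V) : Prop :=
  forall e f, e \in E -> f \in E -> z \in e -> z \notin f -> e :\ z \subset f.

Definition deletion (V : finType) (E : {set {set V}}) (z : V) : {set {set V}} :=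
  [set e in E | z \notin e].

Definition link (V : finType) (E : {set {set V}}) (z : V) : {set {set V}} :=
  [set e :\ z | e in [set e in E | z \in e]].

Section SetDifferences.
Variable V : finType.
Implicit Types a b e f : {set V}.

Lemma leq_card_setD e f : #|e| <= #|f| -> #|e :\: f| <= #|f :\: e|.
Proof. by have := cardsID f e; have := cardsID e f; rewrite setIC; lia. Qed.

Lemma mem_of_setD_card1 a b z v :
  #|a :\: b| = 1 -> z \in a :\: b -> v \in a -> v != z -> v \in b.
Proof.
move=> /eqP/cards1P[c abc]; rewrite abc inE => /eqP-> va; apply: contraNT => vb.
by rewrite -in_set1 -abc inE vb.
Qed.

Lemma setD1_setD a b z : z \in a -> z \in b -> (a :\ z) :\: (b :\ z) = a :\: b.
Proof.
move=> za zb; apply/setP => u; rewrite !inE.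
by case: (eqVneq u z) => [->|_] /=; rewrite ?zb.
Qed.

End SetDifferences.

Section OneSperner.
Variables (V : finType) (E : {set {set V}}).
Hypothesis spE : one_sperner E.

Lemma sperner_setD_gt0 e f : e \in E -> f \in E -> e != f -> 0 < #|e :\: f|.
Proof. by move=> eE fE nef; have := spE eE fE nef; lia. Qed.

Lemma sperner_setD_eq1 e f :
  e \in E -> f \in E -> e != f -> #|e| <= #|f| -> #|e :\: f| = 1.
Proof.
move=> eE fE nef /leq_card_setD; have := spE eE fE nef.
by have := sperner_setD_gt0 eE fE nef; lia.
Qed.

Lemma sperner_setD_eq1_of_gt1 e f :
  e \in E -> f \in E -> 1 < #|e :\: f| -> #|f :\: e| = 1.
Proof.
move=> eE fE lt1; have nef : e != f by apply: contraTneq lt1 => ->; rewrite setDv cards0.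
by have := spE eE fE nef; lia.
Qed.

Lemma sperner_set0 : set0 \in E -> E = [set set0].
Proof.
move=> E0; apply/eqP; rewrite eqEsubset sub1set E0 andbT.
apply/subsetP => f fE; rewrite inE; apply/negPn/negP => nf.
by have := sperner_setD_gt0 E0 fE; rewrite eq_sym set0D cards0 => /(_ nf).
Qed.

Lemma sperner_singleton z e : [set z] \in E -> e \in E -> z \in e -> e = [set z].
Proof.
move=> zE eE ze; apply/eqP/negPn/negP => nez.
have := sperner_setD_gt0 zE eE; rewrite eq_sym => /(_ nez).
by rewrite lt0n cards_eq0 setD_eq0 sub1set ze.
Qed.

Lemma splitting_vertex_of_extremal e0 fs z :
  e0 \in E -> fs \in E -> (forall f, f \in E -> #|e0| <= #|f|) ->
  (forall e, e \in E -> e != e0 -> #|e| <= #|fs|) -> z \in e0 -> z \notin fs ->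
  splitting_vertex E z.
Proof.
move=> e0E fsE e0min fsmax ze0 zfs e f eE fE ze zf.
have e0D g : g \in E -> z \notin g -> #|e0 :\: g| = 1.
  move=> gE zg; apply: sperner_setD_eq1 => //; last exact: e0min.
  by apply: contraNneq zg => <-.
have zfD (g : {set V}) : z \notin g -> z \in e0 :\: g by move=> zg; rewrite inE zg.
apply/subsetP => v; rewrite !inE => /andP[vz ve]; apply/negPn/negP => vf.
have ve0 : v \notin e0.
  by apply: contra vf => ve0; apply: mem_of_setD_card1 (e0D f fE zf) (zfD f zf) ve0 vz.
have nee0 : e != e0 by apply: contraNneq ve0 => <-.
have /eqP/cards1P[y e0ey] : #|e0 :\: e| = 1.
  by apply: sperner_setD_eq1 => //; [rewrite eq_sym | exact: e0min].
have : y \in e0 :\: e by rewrite e0ey set11.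
rewrite inE => /andP[ye ye0].
have yz : y != z by apply: contraNneq ye => ->.
have yf := mem_of_setD_card1 (e0D f fE zf) (zfD f zf) ye0 yz.
have yfs := mem_of_setD_card1 (e0D fs fsE zfs) (zfD fs zfs) ye0 yz.
have zefs : z \in e :\: fs by rewrite inE zfs.
have efs1 : #|e :\: fs| = 1.
  by apply: sperner_setD_eq1 => //; [apply: contraTneq ze => -> | exact: fsmax].
have vfs := mem_of_setD_card1 efs1 zefs ve vz.
have fe1 : #|f :\: e| = 1.
  apply: sperner_setD_eq1_of_gt1 => //; apply: (@leq_trans #|[set v; z]|).
    by rewrite cards2 vz.
  by apply/subset_leq_card/subsetP => u; rewrite !inE => /orP[]/eqP->; rewrite ?vf ?zf.
have /set0Pn[u] : f :\: fs != set0.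
  by rewrite -card_gt0 sperner_setD_gt0 //; apply: contraNneq vf => ->.
rewrite inE => /andP[ufs uf].
have uz : u != z by apply: contraNneq zf => <-.
have ue : u \notin e.
  by apply: contra ufs => ue; apply: mem_of_setD_card1 efs1 zefs ue uz.
have uy : u != y by apply: contraNneq ufs => ->.
have yfe : y \in f :\: e by rewrite inE ye yf.
by have := mem_of_setD_card1 fe1 yfe uf uy; rewrite (negbTE ue).
Qed.

Lemma exists_splitting_vertex :
  E != set0 -> set0 \notin E -> exists2 z, z \in cover E & splitting_vertex E z.
Proof.
case/set0Pn => e1 e1E E0.
have [e0 e0E e0min] := arg_minnP (fun e : {set V} => #|e|) e1E.
have coverE z : z \in e0 -> z \in cover E by move=> ze0; apply/bigcupP; exists e0.
case: (set0Pn (E :\ e0)) => [[f1 f1E] | E_e0].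
  have [fs] := arg_maxnP (fun e : {set V} => #|e|) (f1E : f1 \in [pred f | f \in E :\ e0]).
  rewrite /= !inE => /andP[fse0 fsE] fsmax.
  have /set0Pn[z] : e0 :\: fs != set0 by rewrite -card_gt0 sperner_setD_gt0 // eq_sym.
  rewrite inE => /andP[zfs ze0]; exists z; first exact: coverE.
  apply: splitting_vertex_of_extremal e0E fsE e0min _ ze0 zfs => e eE ee0.
  by apply: fsmax; rewrite !inE ee0.
have /set0Pn[z ze0] : e0 != set0 by apply: contraNneq E0 => <-.
exists z; first exact: coverE.
have onlye0 g : g \in E -> g = e0.
  by move=> gE; apply/eqP/negPn/negP => ge0; apply: E_e0; exists g; rewrite !inE ge0.
by move=> e f /onlye0-> /onlye0-> ->.
Qed.

End OneSperner.

Section DeletionLink.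
Variables (V : finType) (E : {set {set V}}) (z : V).

Lemma one_spernerS (F : {set {set V}}) : F \subset E -> one_sperner E -> one_sperner F.
Proof. by move=> /subsetP FE spE e f /FE eE /FE fE; apply: spE. Qed.

Lemma one_sperner_deletion : one_sperner E -> one_sperner (deletion E z).
Proof. by apply: one_spernerS; apply/subsetP => e; rewrite inE => /andP[]. Qed.

Lemma one_sperner_link : one_sperner E -> one_sperner (link E z).
Proof.
move=> spE _ _ /imsetP[e + ->] /imsetP[g + ->]; rewrite !inE => /andP[eE ze] /andP[gE zg].
rewrite !setD1_setD // => neg; apply: spE => //.
by apply: contraNneq neg => ->.
Qed.

Lemma cover_deletion : cover (deletion E z) \subset cover E :\ z.
Proof.
apply/subsetP => v /bigcupP[e]; rewrite inE => /andP[eE ze] ve.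
rewrite !inE; apply/andP; split; first by apply: contraNneq ze => <-.
by apply/bigcupP; exists e.
Qed.

Lemma cover_link : cover (link E z) \subset cover E :\ z.
Proof.
apply/subsetP => v /bigcupP[_ /imsetP[e + ->]]; rewrite !inE => /andP[eE _] /andP[vz ve].
by rewrite vz; apply/bigcupP; exists e.
Qed.

Lemma link_neq0 : z \in cover E -> link E z != set0.
Proof.
move=> /bigcupP[e eE ze]; apply/set0Pn; exists (e :\ z).
by apply/imsetP; exists e; rewrite // inE eE.
Qed.

Lemma set0_notin_link : [set z] \notin E -> set0 \notin link E z.
Proof.
apply: contra => /imsetP[e]; rewrite inE => /andP[eE ze] /esym/eqP.
rewrite setD_eq0 => ez; suff -> : [set z] = e by [].
by apply/eqP; rewrite eqEsubset ez sub1set ze.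
Qed.

Lemma set0_notin_deletion : set0 \notin E -> set0 \notin deletion E z.
Proof. by apply: contra; rewrite inE => /andP[]. Qed.

End DeletionLink.

Local Open Scope ring_scope.

Lemma sum_indicator (R : pzSemiRingType) (V : finType) (A : {set V}) (z : V) :
  \sum_(v in A) ((v == z)%:R : R) = (z \in A)%:R.
Proof.
have [zA | zA] := boolP (z \in A).
  by rewrite (big_setD1 z) //= eqxx big1 ?addr0 // => v; rewrite !inE => /andP[/negbTE->].
by rewrite big1 // => v vA; case: eqP vA zA => // -> ->.
Qed.

Lemma sum_indicatorT (R : pzSemiRingType) (V : finType) (z : V) :
  \sum_v ((v == z)%:R : R) = 1.
Proof. by rewrite (bigD1 z) //= eqxx big1 ?addr0 // => v /negbTE->. Qed.

Lemma sum_supported (R : nmodType) (V : finType) (A : {set V}) (x : V -> R) :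
  (forall v, v \notin A -> x v = 0) -> \sum_(v in A) x v = \sum_v x v.
Proof.
by move=> xA; rewrite [RHS](bigID (mem A)) /= [X in _ + X]big1 ?addr0 // => v /xA.
Qed.

Section ExactWeightings.
Variables (R : numFieldType) (V : finType).
Implicit Types (E : {set {set V}}) (x : V -> R) (z : V).

Definition exact_weighting E x :=
  [/\ forall v, 0 <= x v, forall v, v \notin cover E -> x v = 0
    & forall e, e \in E -> \sum_(v in e) x v = 1].

Lemma exact_weighting0 : exact_weighting set0 (fun=> 0).
Proof. by split=> // e; rewrite inE. Qed.

Lemma exact_weighting_of_deletion E z x :
  one_sperner E -> [set z] \in E -> exact_weighting (deletion E z) x ->
  exists2 y, exact_weighting E y & 1 <= \sum_v y v.
Proof.
move=> spE zE [x_ge0 x_supp x_exact].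
have z_cover : z \in cover E by apply/bigcupP; exists [set z]; rewrite ?set11.
have x_cover v : v \notin cover E :\ z -> x v = 0.
  by move=> vEz; apply: x_supp; apply: contra vEz; apply/subsetP/cover_deletion.
have xz : x z = 0 by apply: x_cover; rewrite !inE eqxx.
exists (fun v => x v + (v == z)%:R); first split.
- by move=> v; rewrite addr_ge0 ?ler0n.
- move=> v vE; have vz : (v == z) = false by apply: contraNF vE => /eqP->.
  by rewrite vz x_cover ?addr0 // inE negb_and vE orbT.
- move=> e eE; rewrite big_split /= sum_indicator.
  have [ze | ze] := boolP (z \in e).
    by rewrite (sperner_singleton spE zE eE ze) big_set1 xz add0r.
  by rewrite (x_exact e) ?addr0 // inE eE ze.
by rewrite big_split /= sum_indicatorT lerDr sumr_ge0.
Qed.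

Lemma exact_weighting_of_link E z x :
  z \in cover E -> splitting_vertex E z ->
  exact_weighting (link E z) x -> 1 <= \sum_v x v ->
  exists2 y, exact_weighting E y & 1 <= \sum_v y v.
Proof.
move=> z_cover zsplit [x_ge0 x_supp x_exact] x_ge1; set s := \sum_v x v in x_ge1.
have s_gt0 : 0 < s by apply: lt_le_trans x_ge1.
have s_inv_le1 : s^-1 <= 1 by rewrite invf_le1.
have x_cover v : v \notin cover E :\ z -> x v = 0.
  by move=> vEz; apply: x_supp; apply: contra vEz; apply/subsetP/cover_link.
have xz : x z = 0 by apply: x_cover; rewrite !inE eqxx.
exists (fun v => x v / s + (v == z)%:R * (1 - s^-1)); first split.
- by move=> v; rewrite addr_ge0 ?divr_ge0 ?mulr_ge0 ?ler0n ?subr_ge0 ?(ltW s_gt0).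
- move=> v vE; have vz : (v == z) = false by apply: contraNF vE => /eqP->.
  by rewrite vz x_cover ?mul0r ?addr0 // inE negb_and vE orbT.
- move=> e eE; rewrite big_split /= -!mulr_suml sum_indicator.
  have [ze | ze] := boolP (z \in e).
    rewrite (big_setD1 z ze) /= xz add0r x_exact; last first.
      by apply/imsetP; exists e; rewrite // inE eE.
    by rewrite !mul1r addrC subrK.
  rewrite (sum_supported (A := e)) ?mulfV ?gt_eqF // ?mul0r ?addr0 // => v ve.
  apply: x_supp; apply: contra ve => /bigcupP[_ /imsetP[g + ->]].
  by rewrite inE => /andP[gE zg]; apply/subsetP/(zsplit g e).
rewrite big_split /= -!mulr_suml sum_indicatorT mulfV ?gt_eqF // mul1r.
by rewrite lerDl subr_ge0.
Qed.

End ExactWeightings.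

Lemma exists_exact_weighting (R : numFieldType) (V : finType) (E : {set {set V}}) :
  one_sperner E -> set0 \notin E ->
  exists2 x : V -> R, exact_weighting E x & E != set0 -> 1 <= \sum_v x v.
Proof.
have [n] := ubnP #|cover E|; elim: n => // n IH in E *; rewrite ltnS => En spE E0.
have [-> | Ene] := eqVneq E set0.
  by exists (fun=> 0) => [|/eqP //]; exact: exact_weighting0.
have [z z_cover zsplit] := exists_splitting_vertex spE Ene E0.
have card_lt F : cover F \subset cover E :\ z -> (#|cover F| < n)%N.
  by move=> /subset_leq_card FEz; apply: leq_trans En; rewrite (cardsD1 z (cover E)) z_cover.
have [zE | zE] := boolP ([set z] \in E).
  have [x x_exact _] := IH _ (card_lt _ (cover_deletion E z))
    (one_sperner_deletion spE) (set0_notin_deletion z E0).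
  by have [y] := exact_weighting_of_deletion spE zE x_exact; exists y.
have [x x_exact x_ge1] := IH _ (card_lt _ (cover_link E z))
  (one_sperner_link spE) (set0_notin_link zE).
have [y] := exact_weighting_of_link z_cover zsplit x_exact (x_ge1 (link_neq0 z_cover)).
by exists y.
Qed.

Lemma incidence_mulE (R : realType) (V : finType) (x : V -> R) e :
  incidence_mul x e = \sum_(v in e) x v.
Proof.
rewrite /incidence_mul /incidence [RHS]big_mkcond; apply: eq_bigr => v _.
by case: (v \in e); rewrite ?mul1r ?mul0r.
Qed.

Theorem lemma13 (R : realType) (V : finType) (E : {set {set V}}) :
  one_sperner E -> E != set0 -> E != [set set0] ->
  exists x : V -> R,
    (forall v, 0 <= x v) /\
    (forall e, e \in E -> incidence_mul x e = 1) /\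
    1 <= \sum_(v : V) x v.
Proof.
move=> spE Ene Ene0.
have E0 : set0 \notin E by apply: contra Ene0 => /(sperner_set0 spE) ->.
have [x [x_ge0 _ x_exact] x_ge1] := exists_exact_weighting R spE E0.
exists x; split=> //; split; last exact: x_ge1.
by move=> e eE; rewrite incidence_mulE x_exact.
Qed.
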